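(* Let $\Lambda=\{0,1,2\}^2\subset\mathbb{Z}^2$ and let $\mu$ be the probability measure on $\{0,1\}^\Lambda$ giving probability $1/7$ to each of the seven configurations whose sets of occupied sites are: $\{(1,1)\}$, $\{(1,0)\}$, $\{(2,1)\}$, $\{(1,2)\}$, $\{(0,1)\}$, $\{(0,2),(2,0)\}$, $\{(0,0),(2,2)\}$ (all other sites empty). Then $\mu$ is LTI and invariant under all symmetries of the square, but there is no probability measure on configurations of a $4\times4$ square $\Lambda'\supset\Lambda$ whose marginal on each $3\times3$ subsquare of $\Lambda'$ is the corresponding translate of $\mu$; in particular $\mu$ has no translation invariant extension to $\{0,1\}^{\mathbb{Z}^2}$.
   Context: A probability measure $\mu_\Lambda$ on $\{0,1\}^\Lambda$, $\Lambda\subset\mathbb{Z}^d$, is LTI if for all $A,A'\subset\Lambda$ with $A'$ a translate of $A$, the marginal on $\{0,1\}^{A'}$ is the translate of the marginal on $\{0,1\}^A$. Symmetries of the square are the eight dihedral symmetries of $\{0,1,2\}^2$. *)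

From HB Require Import structures.
From mathcomp Require Import all_boot all_order all_algebra.
Set Implicit Arguments. Unset Strict Implicit. Unset Printing Implicit Defensive.
Import Order.TTheory GRing.Theory Num.Theory.
Local Open Scope ring_scope.

Definition site (n : nat) := ('I_n * 'I_n)%type.
Definition config (n : nat) := {ffun site n -> bool}.

Definition coords n (x : site n) : int * int := ((x.1 : nat)%:Z, (x.2 : nat)%:Z).
Definition tr (v : int * int) (z : int * int) : int * int := (z.1 + v.1, z.2 + v.2).

Definition is_prob (R : numDomainType) n (p : config n -> R) : Prop :=
  (forall s, 0 <= p s) /\ \sum_(s : config n) p s = 1.

Definition cyl (R : numDomainType) n (p : config n -> R) (A : {set site n})
  (xi : site n -> bool) : R :=
  \sum_(s : config n | [forall x in A, s x == xi x]) p s.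

(* LTI: whenever g maps A onto a translate A' = A + v inside the box,
   the marginal on A' is the translate of the marginal on A. *)
Definition LTI (R : numDomainType) n (p : config n -> R) : Prop :=
  forall (A : {set site n}) (v : int * int) (g : site n -> site n),
    (forall x, x \in A -> coords (g x) = tr v (coords x)) ->
    forall xi : site n -> bool,
      \sum_(s : config n | [forall x in A, s (g x) == xi x]) p s = cyl p A xi.

(* The eight dihedral symmetries of {0,1,2}^2: optional transpose, then
   optional reflections of each coordinate. *)
Definition flip (b : bool) (i : 'I_3) : 'I_3 := if b then rev_ord i else i.
Definition dsym (b1 b2 b3 : bool) (x : site 3) : site 3 :=
  let y := if b3 then (x.2, x.1) else x in (flip b1 y.1, flip b2 y.2).

Definition pt (i j : nat) : site 3 := (inord i, inord j).
Definition cfg (l : seq (site 3)) : config 3 := [ffun x => x \in l].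

Definition mu_support : seq (config 3) :=
  [:: cfg [:: pt 1 1]; cfg [:: pt 1 0]; cfg [:: pt 2 1]; cfg [:: pt 1 2];
      cfg [:: pt 0 1]; cfg [:: pt 0 2; pt 2 0]; cfg [:: pt 0 0; pt 2 2]].

Definition mu (R : fieldType) (s : config 3) : R :=
  if s \in mu_support then 7%:R^-1 else 0.

Definition emb (a b : 'I_2) (x : site 3) : site 4 :=
  (inord (x.1 + a)%N, inord (x.2 + b)%N).

From HB Require Import structures.
From mathcomp Require Import all_boot all_order all_algebra.
From mathcomp Require Import zify.
Set Implicit Arguments. Unset Strict Implicit. Unset Printing Implicit Defensive.
Import Order.TTheory GRing.Theory Num.Theory.

(* mu is the uniform measure on seven patterns, so every claim about it is a
   count over this list.  Local translation invariance reduces, for each of the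
   25 translation vectors v, to the equality of the multisets of patterns seen
   through the window (box) /\ (box - v), translated or not; the dihedral
   symmetries permute the seven patterns.  For the extension: a measure on the
   4x4 square with the right marginals gives mass 1/7 to configurations whose
   corner 3x3 subsquare shows {(1,0)}, and all four 3x3 subsquares of such a
   configuration must be patterns of mu.  The subsquares shifted by (1,0) and
   (0,1) are then forced to be {(0,0),(2,2)} and {(1,2)}, which occupy the
   sites (2,1) and (0,2) of the subsquare shifted by (1,1): no pattern of mu
   does that. *)

(* [inord] does not reduce (it goes through the opaque [idP]) but [inZp] does,
   so the finite checks below are run on [ptZ], [embZ] and lists of sites. *)
Definition ptZ (i j : nat) : site 3 := (inZp i, inZp j).

Lemma ptE i j : (i < 3)%N -> (j < 3)%N -> pt i j = ptZ i j.
Proof. by move=> ? ?; congr pair; apply: val_inj; rewrite /= inordK // modn_small. Qed.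

Definition sites3 : seq (site 3) := [seq ptZ i j | i <- iota 0 3, j <- iota 0 3].

Lemma mem_sites3 x : x \in sites3.
Proof.
case: x => i j; have -> : (i, j) = ptZ i j.
  by congr pair; apply: val_inj; rewrite /= modn_small.
by apply: allpairs_f; rewrite mem_iota add0n ltn_ord.
Qed.

Definition support_of (f : site 3 -> bool) : seq (site 3) := [seq x <- sites3 | f x].

Lemma mem_support_of f x : (x \in support_of f) = f x.
Proof. by rewrite mem_filter mem_sites3 andbT. Qed.

Lemma eq_support_of f g : f =1 g -> support_of f = support_of g.
Proof. by move=> fg; apply: eq_filter. Qed.

Lemma support_of_inj : injective (fun s : config 3 => support_of s).
Proof. by move=> s t st; apply/ffunP => x; rewrite -!mem_support_of st. Qed.

(* Each pattern is listed in the order of [sites3], so that [support_of (cfg l) = l]. *)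
Definition mu_patterns : seq (seq (site 3)) :=
  [:: [:: ptZ 1 1]; [:: ptZ 1 0]; [:: ptZ 2 1]; [:: ptZ 1 2];
      [:: ptZ 0 1]; [:: ptZ 0 2; ptZ 2 0]; [:: ptZ 0 0; ptZ 2 2]].

Lemma mu_supportE : mu_support = map cfg mu_patterns.
Proof. by rewrite /mu_support !ptE. Qed.

Lemma support_of_cfg l : l \in mu_patterns -> support_of (cfg l) = l.
Proof.
move=> lL; rewrite (@eq_support_of _ (mem l)) => [|x]; last by rewrite ffunE.
have check : all (fun l => support_of (mem l) == l) mu_patterns by vm_compute.
exact/eqP/(allP check).
Qed.

Lemma mem_mu_support s : (s \in mu_support) = (support_of s \in mu_patterns).
Proof.
rewrite mu_supportE; apply/mapP/idP => [[l lL ->] | sL]; first by rewrite support_of_cfg.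
by exists (support_of s) => //; apply: support_of_inj; rewrite support_of_cfg.
Qed.

Lemma uniq_mu_support : uniq mu_support.
Proof.
rewrite -(map_inj_uniq support_of_inj).
have -> : [seq support_of s | s : config 3 <- mu_support] = mu_patterns.
  by rewrite mu_supportE -map_comp -[RHS]map_id; apply/eq_in_map => l /support_of_cfg.
by vm_compute.
Qed.

Local Open Scope ring_scope.

Lemma sum_mu (R : fieldType) (P : pred (config 3)) :
  \sum_(s | P s) mu R s = (count P mu_support)%:R / 7%:R.
Proof.
set c := count P mu_support.
rewrite (bigID (mem mu_support)) /= [X in _ + X]big1 ?addr0; last first.
  by move=> s /andP[_ /negbTE sN]; rewrite /mu sN.
rewrite (eq_bigr (fun=> 7%:R^-1)) => [|s /andP[_ sS]]; last by rewrite /mu sS.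
rewrite sumr_const mulr_natl /c -size_filter; congr (_ *+ _).
have /card_uniqP <- := filter_uniq P uniq_mu_support.
by apply: eq_card => s; rewrite mem_filter.
Qed.

Lemma is_prob_mu (R : numFieldType) : is_prob (@mu R).
Proof.
split=> [s | ]; first by rewrite /mu; case: ifP; rewrite ?invr_ge0 ?ler0n.
by rewrite (eq_bigl predT) // sum_mu count_predT divff ?pnatr_eq0.
Qed.

Lemma flipK b : involutive (flip b).
Proof. by case: b => // i; rewrite /flip rev_ordK. Qed.

Lemma dsymVK b1 b2 b3 :
  cancel (dsym (if b3 then b2 else b1) (if b3 then b1 else b2) b3) (dsym b1 b2 b3).
Proof. by case: b3 => -[i j]; rewrite /dsym /= !flipK. Qed.

Lemma mu_support_dsym b1 b2 b3 (s : config 3) :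
  s \in mu_support -> [ffun x => s (dsym b1 b2 b3 x)] \in mu_support.
Proof.
have closed : all (fun l => support_of (fun x => dsym b1 b2 b3 x \in l) \in mu_patterns)
                  mu_patterns.
  by case: b1 b2 b3 => [] [] []; vm_compute.
rewrite mu_supportE => /mapP[l lL ->]; rewrite -mu_supportE mem_mu_support.
rewrite (@eq_support_of _ (fun x => dsym b1 b2 b3 x \in l)) ?(allP closed) // => x.
by rewrite !ffunE.
Qed.

Lemma mu_dsym (R : fieldType) b1 b2 b3 (s : config 3) :
  mu R [ffun x => s (dsym b1 b2 b3 x)] = mu R s.
Proof.
rewrite /mu; congr (if _ then _ else _); apply/idP/idP; last exact: mu_support_dsym.
set c1 := if b3 then b2 else b1; set c2 := if b3 then b1 else b2.
move=> /(mu_support_dsym c1 c2 b3).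
suff -> : [ffun x => [ffun y => s (dsym b1 b2 b3 y)] (dsym c1 c2 b3 x)] = s by [].
by apply/ffunP => x; rewrite !ffunE dsymVK.
Qed.

(* [(d1, d2)] encodes the translation vector [(d1 - 2, d2 - 2)]. *)
Definition in_window (d1 d2 : nat) (x : site 3) : bool :=
  [&& 2 <= x.1 + d1 < 5 & 2 <= x.2 + d2 < 5]%N.

Definition translate (d1 d2 : nat) (x : site 3) : site 3 :=
  (inZp (x.1 + d1 - 2)%N, inZp (x.2 + d2 - 2)%N).

Lemma translation_vector (v : int * int) (x y : site 3) :
  coords y = tr v (coords x) ->
  exists d1 d2 : nat, v = (d1%:Z - 2, d2%:Z - 2).
Proof.
case: v x y => v1 v2 [[i Hi] [j Hj]] [[k Hk] [l Hl]]; rewrite /coords /tr /= => -[e1 e2].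
by exists (absz (v1 + 2)), (absz (v2 + 2)); congr pair; lia.
Qed.

Lemma translate_coords (d1 d2 : nat) (x y : site 3) :
  coords y = tr (d1%:Z - 2, d2%:Z - 2) (coords x) ->
  in_window d1 d2 x /\ y = translate d1 d2 x.
Proof.
case: x y => [[i Hi] [j Hj]] [[k Hk] [l Hl]]; rewrite /coords /tr /= => -[e1 e2].
split; first by rewrite /in_window /=; lia.
by congr pair; apply: val_inj; rewrite /= modn_small; lia.
Qed.

(* For [d1 >= 5] or [d2 >= 5] the window is empty, hence no bound on [d]. *)
Lemma translate_window_perm (d1 d2 : nat) :
  perm_eq
    [seq support_of (fun x => in_window d1 d2 x && (translate d1 d2 x \in l)) | l <- mu_patterns]
    [seq support_of (fun x => in_window d1 d2 x && (x \in l)) | l <- mu_patterns].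
Proof.
by move: d1 d2 => [|[|[|[|[|d1]]]]] [|[|[|[|[|d2]]]]]; vm_compute.
Qed.

Lemma count_translate (A : {set site 3}) (d1 d2 : nat) (g : site 3 -> site 3)
    (xi : site 3 -> bool) :
  {in A, forall x, in_window d1 d2 x /\ g x = translate d1 d2 x} ->
  count (fun s : config 3 => [forall x in A, s (g x) == xi x]) mu_support =
  count (fun s : config 3 => [forall x in A, s x == xi x]) mu_support.
Proof.
move=> gA; pose Q (t : seq (site 3)) := [forall x in A, (x \in t) == xi x].
rewrite mu_supportE !count_map.
transitivity (count Q [seq support_of (fun x => in_window d1 d2 x && (translate d1 d2 x \in l))
                        | l <- mu_patterns]).
  rewrite count_map; apply: eq_count => l /=; apply: eq_forallb_in => x xA.
  by rewrite mem_support_of ffunE; case: (gA x xA) => -> ->.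
rewrite (permP (translate_window_perm d1 d2)) count_map.
apply: eq_count => l /=; apply: eq_forallb_in => x xA.
by rewrite mem_support_of ffunE; case: (gA x xA) => ->.
Qed.

Lemma lti_mu (R : numFieldType) : LTI (@mu R).
Proof.
move=> A v g gA xi; rewrite /cyl !sum_mu; congr (_%:R / _).
have [A0 | [x0 x0A]] := set_0Vmem A.
  by apply: eq_count => s; rewrite A0; apply/forall_inP/forall_inP => _ x; rewrite in_set0.
have [d1 [d2 ev]] := translation_vector (gA x0 x0A).
by apply: (@count_translate _ d1 d2 _ xi) => x /gA; rewrite ev => /translate_coords.
Qed.

Definition subsquare (a b : 'I_2) (s : config 4) : config 3 := [ffun x => s (emb a b x)].

Definition embZ (a b : nat) (x : site 3) : site 4 := (inZp (x.1 + a)%N, inZp (x.2 + b)%N).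

Lemma embE (a b : 'I_2) x : emb a b x = embZ a b x.
Proof.
have lt4 (i : 'I_3) (c : 'I_2) : (i + c < 4)%N by move: (ltn_ord i) (ltn_ord c); lia.
by congr pair; apply: val_inj; rewrite /= inordK ?modn_small ?lt4.
Qed.

Definition agree_on_overlap (a b a' b' : nat) (l l' : seq (site 3)) : bool :=
  all (fun x => all (fun y =>
    (embZ a b x == embZ a' b' y) ==> ((x \in l) == (y \in l'))) sites3) sites3.

Lemma subsquare_agree (s : config 4) (a b a' b' : 'I_2) l l' :
  subsquare a b s = cfg l -> subsquare a' b' s = cfg l' -> agree_on_overlap a b a' b' l l'.
Proof.
move=> sl sl'; apply/allP => x _; apply/allP => y _; apply/implyP; rewrite -!embE => /eqP e.
have := congr1 (fun t : config 3 => t x) sl; have := congr1 (fun t : config 3 => t y) sl'.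
by rewrite !ffunE e => -> ->.
Qed.

Lemma corner_not_extendable (s : config 4) :
  subsquare ord0 ord0 s = cfg [:: pt 1 0] ->
  subsquare ord_max ord0 s \in mu_support -> subsquare ord0 ord_max s \in mu_support ->
  subsquare ord_max ord_max s \notin mu_support.
Proof.
rewrite ptE // mu_supportE => s00 /mapP[l10 L10 s10] /mapP[l01 L01 s01].
apply/mapP => -[l11 L11 s11].
have glue : all (fun l10 => all (fun l01 => all (fun l11 =>
   ~~ [&& agree_on_overlap 0 0 1 0 [:: ptZ 1 0] l10, agree_on_overlap 0 0 0 1 [:: ptZ 1 0] l01,
          agree_on_overlap 0 0 1 1 [:: ptZ 1 0] l11, agree_on_overlap 1 0 0 1 l10 l01,
          agree_on_overlap 1 0 1 1 l10 l11 & agree_on_overlap 0 1 1 1 l01 l11])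
     mu_patterns) mu_patterns) mu_patterns by vm_compute.
have /negP[] := allP (allP (allP glue _ L10) _ L01) _ L11.
by rewrite (subsquare_agree s00 s10) (subsquare_agree s00 s01) (subsquare_agree s00 s11)
          (subsquare_agree s10 s01) (subsquare_agree s10 s11) (subsquare_agree s01 s11).
Qed.

Lemma extension_vanishes_off_support (R : numFieldType) (q : config 4 -> R)
    (a b : 'I_2) (s : config 4) :
  (forall t, 0 <= q t) ->
  (forall eta : config 3,
      \sum_(t : config 4 | [forall x, t (emb a b x) == eta x]) q t = mu R eta) ->
  subsquare a b s \notin mu_support -> q s = 0.
Proof.
move=> q_ge0 marg sN; move: (marg (subsquare a b s)); rewrite /mu (negbTE sN).
by move/psumr_eq0P; apply=> [t _ | ]; last by apply/forallP => x; rewrite ffunE.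
Qed.

Theorem mainTheorem14 (R : realFieldType) :
  is_prob (@mu R) /\ LTI (@mu R) /\
  (forall (b1 b2 b3 : bool) (s : config 3),
      @mu R [ffun x => s (dsym b1 b2 b3 x)] = @mu R s) /\
  ~ (exists q : config 4 -> R,
        is_prob q /\
        forall (a b : 'I_2) (eta : config 3),
          \sum_(s : config 4 | [forall x : site 3, s (emb a b x) == eta x]) q s
          = @mu R eta).
Proof.
split; first exact: is_prob_mu.
split; first exact: lti_mu.
split; first exact: mu_dsym.
case=> q [[q_ge0 _] marg].
have corner_mass : @mu R (cfg [:: pt 1 0]) = 7%:R^-1 by rewrite /mu !inE eqxx orbT.
have : \sum_(s : config 4 | [forall x, s (emb ord0 ord0 x) == cfg [:: pt 1 0] x]) q s = 0.
  apply: big1 => s /forallP s00.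
  have {}s00 : subsquare ord0 ord0 s = cfg [:: pt 1 0].
    by apply/ffunP => x; rewrite ffunE; apply/eqP.
  have vanish a b := extension_vanishes_off_support (s := s) q_ge0 (marg a b).
  have [s10 | /vanish //] := boolP (subsquare ord_max ord0 s \in mu_support).
  have [s01 | /vanish //] := boolP (subsquare ord0 ord_max s \in mu_support).
  exact: vanish (corner_not_extendable s00 s10 s01).
by rewrite marg corner_mass => /eqP; rewrite invr_eq0 pnatr_eq0.
Qed.
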